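(* Let $B$ be a (3,3)-SAT instance with variables $x_1,\dots,x_n$ and clauses $C_1,\dots,C_m$, and let $(G,Z,\mathrm{col},\bar\alpha,\bar\beta,t)$ be the Fair Colorful Weighted Perfect Matching instance constructed from $B$ as described in the context. If $B$ is satisfiable, then $G$ has a perfect matching of total weight at least $t=3n+m$ in which, for every color, exactly one vertex of that color is matched to a vertex of $Z$.
   Context: (3,3)-SAT: a CNF formula $B=C_1\wedge\dots\wedge C_m$ over variables $x_1,\dots,x_n$, where each clause contains at most three literals and each variable occurs in at most three clauses in total; the question is whether $B$ is satisfiable. Construction: for each variable $x_i$ add to $V$ the six vertices $(x_i^T,r),(x_i^F,r)$ for $r\in\{1,2,3\}$ and to $W$ the three vertices $(x_i,a),(x_i,b),(x_i,c)$, all three placed in $Z$ (so $|Z|=3n$); introduce three new colors $c_{i,1},c_{i,2},c_{i,3}$ with $\mathrm{col}((x_i^T,r))=\mathrm{col}((x_i^F,r))=c_{i,r}$. Give weight $1$ to the edges $(x_i,a)$–$(x_i^T,1)$, $(x_i,a)$–$(x_i^F,3)$, $(x_i,b)$–$(x_i^T,2)$, $(x_i,b)$–$(x_i^F,1)$, $(x_i,c)$–$(x_i^T,3)$, $(x_i,c)$–$(x_i^F,2)$. For each clause $C_j$ add a vertex $C_j$ to $W$; fixing an ordering of the clauses, for each literal of $x_i$ in $C_j$ that is the $r$-th occurrence of $x_i$ in $B$, add a weight-$1$ edge $(x_i^T,r)$–$C_j$ if the literal is $x_i$ and $(x_i^F,r)$–$C_j$ if it is $\neg x_i$. Add dummy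 vertices to $W$ until $|W|=|V|=6n$; all remaining pairs in $V\times W$ get weight-$0$ edges, making $G$ complete bipartite. Set $t=3n+m$ and $\alpha_c=\beta_c=1/(3n)$ for every color $c$ (so exactly one vertex of each color must be matched into $Z$). *)

From mathcomp Require Import all_boot.
Set Implicit Arguments. Unset Strict Implicit. Unset Printing Implicit Defensive.

(* A literal over variables 'I_n : (variable, polarity); polarity true = x_i,
   false = ~ x_i. *)
Definition literal (n : nat) := ('I_n * bool)%type.
Definition cnf (n m : nat) := 'I_m -> seq (literal n).

Definition occ n m (B : cnf n m) (i : 'I_n) : seq ('I_m * bool) :=
  flatten [seq [seq (j, l.2) | l <- B j & l.1 == i] | j <- enum 'I_m].

Definition is_33sat n m (B : cnf n m) : Prop :=
  (forall j, size (B j) <= 3) /\ (forall i, size (occ B i) <= 3).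

Definition lit_true n (a : 'I_n -> bool) (l : literal n) : bool := a l.1 == l.2.

Definition satisfiable n m (B : cnf n m) : Prop :=
  exists a : 'I_n -> bool, forall j, has (lit_true a) (B j).

(* V : vertices (x_i^T, r) = (i, r, true) and (x_i^F, r) = (i, r, false),
   with r in {1,2,3} encoded as 'I_3 = {0,1,2}. *)
Definition Vtx (n : nat) := ('I_n * 'I_3 * bool)%type.
(* W : variable vertices (x_i, k), k in {a,b,c} encoded as 'I_3 = {0,1,2};
   clause vertices C_j; and 3n - m dummy vertices, so |W| = 6n when m <= 3n. *)
Definition Wtx (n m : nat) := (('I_n * 'I_3) + ('I_m + 'I_(3 * n - m)))%type.

Definition inZ n m (w : Wtx n m) : bool := if w is inl _ then true else false.

Definition color n (v : Vtx n) : 'I_n * 'I_3 := v.1.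

(* Edge weights (G is complete bipartite; weight 1 or 0). *)
Definition weight n m (B : cnf n m) (v : Vtx n) (w : Wtx n m) : nat :=
  let: (i, r, b) := v in
  match w with
  | inl (i', k) =>
      (i == i') && (if b then k == r else (k : nat) == (r.+1 %% 3))
  | inr (inl j) =>
      nth None [seq Some o | o <- occ B i] r == Some (j, b)
  | inr (inr _) => false
  end.

Definition perfect_matching n m (M : {set Vtx n * Wtx n m}) : Prop :=
  (forall v : Vtx n, #|[set w | (v, w) \in M]| = 1) /\
  (forall w : Wtx n m, #|[set v | (v, w) \in M]| = 1).

Definition mweight n m (B : cnf n m) (M : {set Vtx n * Wtx n m}) : nat :=
  \sum_(e in M) weight B e.1 e.2.

(* Fairness: for every colour c, exactly one vertex of colour c is matched
   to a vertex of Z (alpha_c = beta_c = 1/(3n) with |Z| = 3n). *)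
Definition fair n m (M : {set Vtx n * Wtx n m}) : Prop :=
  forall c : 'I_n * 'I_3,
    #|[set e in M | (color e.1 == c) && inZ e.2]| = 1.

(* Fix a satisfying assignment a.  Each variable vertex (x_i, k) is matched to the
   falsified literal vertices (x_i^{~a i}, r) along the weight-1 rotation, which uses
   every colour exactly once inside Z.  Each clause C_j is matched to the occurrence
   vertex of one of its true literals; distinct clauses get distinct occurrences.
   The remaining true-literal vertices, 3n - m of them, go to the dummies.  This
   gives a perfect matching with 3n + m edges of weight 1. *)

From mathcomp Require Import all_boot zify.

Set Implicit Arguments.
Unset Strict Implicit.
Unset Printing Implicit Defensive.

Definition graph_matching n m (f : Wtx n m -> Vtx n) : {set Vtx n * Wtx n m} :=
  [set (f w, w) | w : Wtx n m].

Lemma graph_matching_perfect n m (f : Wtx n m -> Vtx n) :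
  bijective f -> perfect_matching (graph_matching f).
Proof.
case=> h fK hK; split.
- move=> v; have -> : [set w | (v, w) \in graph_matching f] = [set h v].
    apply/setP => w; rewrite !inE; apply/imsetP/eqP.
      by case=> w' _ [-> ->]; rewrite fK.
    by move=> ->; exists (h v); rewrite ?hK.
  by rewrite cards1.
- move=> w; have -> : [set v | (v, w) \in graph_matching f] = [set f w].
    apply/setP => v; rewrite !inE; apply/imsetP/eqP.
      by case=> w' _ [-> ->].
    by move=> ->; exists w.
  by rewrite cards1.
Qed.

Lemma mweight_graph_matching n m (B : cnf n m) (f : Wtx n m -> Vtx n) :
  mweight B (graph_matching f) = \sum_(w : Wtx n m) weight B (f w) w.
Proof. by rewrite /mweight big_imset //= => x y _ _ []. Qed.

Lemma graph_matching_fair n m (f : Wtx n m -> Vtx n) :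
  injective (fun p => color (f (inl p))) -> fair (graph_matching f).
Proof.
move=> colZ_inj c.
have [h hK Kh] := injF_bij colZ_inj.
have -> : [set e in graph_matching f | (color e.1 == c) && inZ e.2]
          = [set (f (inl (h c)), inl (h c))].
  apply/setP => e; rewrite !inE; apply/andP/eqP.
    case=> /imsetP [w _ ->] /andP [/eqP colc].
    by case: w colc => [p|w] //= <- _; rewrite hK.
  move=> ->; split; first exact: imset_f.
  by rewrite /= Kh eqxx.
by rewrite cards1.
Qed.

(* (x_i^b, var_nbr b k) is the literal vertex joined to (x_i, k) by a weight-1 edge:
   r = k on the true side and k = r + 1 mod 3 on the false side. *)
Definition var_nbr (b : bool) (k : 'I_3) : 'I_3 :=
  if b then k else Ordinal (@ltn_pmod (k + 2) 3 isT).

Lemma var_nbr_inj b : injective (var_nbr b).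
Proof.
case: b => // k1 k2 /(congr1 val) /= E; apply: val_inj => /=.
by have := ltn_ord k1; have := ltn_ord k2; lia.
Qed.

Lemma weight_var_nbr n m (B : cnf n m) i k b :
  weight B (i, var_nbr b k, b) (inl (i, k)) = 1.
Proof.
rewrite /weight eqxx; case: b => /=; first by rewrite eqxx.
by have := ltn_ord k; case: eqP => //; lia.
Qed.

Lemma mem_occ n m (B : cnf n m) j (l : literal n) :
  l \in B j -> (j, l.2) \in occ B l.1.
Proof.
move=> lBj; apply/flattenP.
exists [seq (j, l'.2) | l' <- B j & l'.1 == l.1]; first exact: map_f (mem_enum _ _).
by apply: map_f; rewrite mem_filter eqxx.
Qed.

Lemma weight_clause_inj n m (B : cnf n m) v j j' :
  weight B v (inr (inl j)) = 1 -> weight B v (inr (inl j')) = 1 -> j = j'.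
Proof.
case: v => [[i r] b] /=.
by case: eqP => // -> _; case: eqP => // -[].
Qed.

Section Construction.

Variables (n m : nat) (B : cnf n m) (a : 'I_n -> bool).
Hypothesis occ_le3 : forall i, size (occ B i) <= 3.
Hypothesis a_sat : forall j, has (lit_true a) (B j).

Definition true_lits : {set Vtx n} := [set v | v.2 == a v.1.1].

Lemma card_true_lits : #|true_lits| = 3 * n.
Proof.
have -> : true_lits = [set (p, a p.1) | p : 'I_n * 'I_3].
  apply/setP => -[p b]; rewrite !inE /=; apply/eqP/imsetP.
    by move=> ->; exists p.
  by case=> q _ [-> ->].
rewrite card_imset; last by move=> p q /(congr1 fst).
by rewrite card_prod !card_ord mulnC.
Qed.

Lemma exists_clause_witness j :
  exists v, (v \in true_lits) && (weight B v (inr (inl j)) == 1).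
Proof.
have /hasP [l lBj /eqP l_true] := a_sat j.
have occ_j := mem_occ lBj.
have r_lt3 : index (j, l.2) (occ B l.1) < 3.
  by apply: leq_trans (occ_le3 l.1); rewrite index_mem.
exists (l.1, Ordinal r_lt3, l.2); rewrite inE /= l_true eqxx /=.
by rewrite (nth_map (j, l.2)) ?index_mem // nth_index // eqxx.
Qed.

Definition clause_witness j : Vtx n := xchoose (exists_clause_witness j).

Lemma clause_witness_true j : clause_witness j \in true_lits.
Proof. by case/andP: (xchooseP (exists_clause_witness j)). Qed.

Lemma weight_clause_witness j : weight B (clause_witness j) (inr (inl j)) = 1.
Proof. by case/andP: (xchooseP (exists_clause_witness j)) => _ /eqP. Qed.

Lemma clause_witness_inj : injective clause_witness.
Proof.
move=> j j' E; apply: (@weight_clause_inj _ _ B (clause_witness j)).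
  exact: weight_clause_witness.
by rewrite E weight_clause_witness.
Qed.

Definition spare_lits : {set Vtx n} := true_lits :\: clause_witness @: setT.

Lemma witnesses_sub_true : clause_witness @: setT \subset true_lits.
Proof. by apply/subsetP => v /imsetP [j _ ->]; exact: clause_witness_true. Qed.

Lemma card_witnesses : #|clause_witness @: setT| = m.
Proof. by rewrite card_imset ?cardsT ?card_ord //; exact: clause_witness_inj. Qed.

Lemma card_spare_lits : 3 * n - m = #|spare_lits|.
Proof.
by rewrite cardsD (setIidPr witnesses_sub_true) card_true_lits card_witnesses.
Qed.

Definition partner (w : Wtx n m) : Vtx n :=
  match w with
  | inl (i, k) => (i, var_nbr (~~ a i) k, ~~ a i)
  | inr (inl j) => clause_witness j
  | inr (inr d) => enum_val (cast_ord card_spare_lits d)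
  end.

Lemma partner_true w : (partner w \in true_lits) = ~~ inZ w.
Proof.
case: w => [[i k]|[j|d]] /=.
- by rewrite inE /=; case: (a i).
- exact: clause_witness_true.
- by have := enum_valP (cast_ord card_spare_lits d); rewrite !inE => /andP [].
Qed.

Lemma partner_spare d : partner (inr (inr d)) \in spare_lits.
Proof. exact: enum_valP. Qed.

Lemma partner_inj : injective partner.
Proof.
have witness_not_spare j : clause_witness j \notin spare_lits.
  by rewrite inE imset_f.
move=> w w' E; case: w E => [[i k]|w] E.
  case: w' E => [[i' k'] [-> /var_nbr_inj -> _] //|w'] E.
  by have := partner_true (inr w'); rewrite -E partner_true.
case: w' E => [p' E|]; first by have := partner_true (inl p'); rewrite -E partner_true.
case: w => [j|d] [j'|d'] /= E.
- by rewrite (clause_witness_inj E).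
- by have := partner_spare d'; rewrite /= -E (negbTE (witness_not_spare j)).
- by have := partner_spare d; rewrite /= E (negbTE (witness_not_spare j')).
- by move/enum_val_inj/cast_ord_inj: E => ->.
Qed.

Lemma m_le_3n : m <= 3 * n.
Proof. by rewrite -card_true_lits -card_witnesses subset_leq_card ?witnesses_sub_true. Qed.

Lemma partner_bij : bijective partner.
Proof.
apply: (inj_card_bij partner_inj).
by have := m_le_3n; rewrite !card_sum !card_prod !card_ord card_bool; lia.
Qed.

Lemma partner_weight : 3 * n + m <= \sum_(w : Wtx n m) weight B (partner w) w.
Proof.
rewrite !big_sumType /=.
rewrite (eq_bigr (fun=> 1)); last by move=> [i k] _; exact: weight_var_nbr.
rewrite [X in _ <= _ + (X + _)](eq_bigr (fun=> 1)); last first.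
  by move=> j _; exact: weight_clause_witness.
rewrite !sum1_card leq_add //; first by rewrite card_prod !card_ord mulnC.
by rewrite card_ord leq_addr.
Qed.

Lemma partner_color_inj : injective (fun p => color (partner (inl p))).
Proof. by move=> [i k] [i' k'] [-> /var_nbr_inj ->]. Qed.

End Construction.

Theorem lemmaD4 (n m : nat) (B : cnf n m) :
  is_33sat B -> satisfiable B ->
  exists M : {set Vtx n * Wtx n m},
    perfect_matching M /\ 3 * n + m <= mweight B M /\ fair M.
Proof.
move=> [_ occ_le3] [a a_sat].
exists (graph_matching (partner occ_le3 a_sat)); split; last split.
- exact/graph_matching_perfect/partner_bij.
- by rewrite mweight_graph_matching; exact: partner_weight.
- exact/graph_matching_fair/partner_color_inj.
Qed.
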